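(* Let $(X,\tau)$ be a fuzzifying topological space such that $\tau_P(A\cap B)\ge\min(\tau_P(A),\tau_P(B))$ for all $A,B\subseteq X$. Then $\max\big(0,T_2^P(X,\tau)+\Gamma_P(X,\tau)-1\big)\le T_4^P(X,\tau)$, i.e. $\vDash T_2^P(X,\tau)\otimes\Gamma_P(X,\tau)\to T_4^P(X,\tau)$.
   Context: A fuzzifying topology on $X$ is $\tau:P(X)\to[0,1]$ with $\tau(X)=1$, $\tau(A\cap B)\ge\min(\tau(A),\tau(B))$, $\tau(\bigcup A_\lambda)\ge\inf\tau(A_\lambda)$. $N_x(A)=\sup_{x\in B\subseteq A}\tau(B)$; $Cl(A)(x)=1-N_x(X\setminus A)$; for $\mu:X\to[0,1]$, $Int(\mu)(x)=\sup_{x\in B}\min(\tau(B),\inf_{y\in B}\mu(y))$; pre-open degrees $\tau_P(A)=\inf_{x\in A}Int(Cl(A))(x)$; $N^P_x(A)=\sup_{x\in B\subseteq A}\tau_P(B)$. $T_2^P(X,\tau)=\inf_{x\ne y}\sup\{\min(N^P_x(U),N^P_y(V)):U\cap V=\emptyset\}$. Pre-normality: $T_4^P(X,\tau)=\inf_{A,B\subseteq X,A\cap B=\emptyset}\min\big(1,1-\min(\tau_P(X\setminus A),\tau_P(X\setminus B))+\sup\{\min(\tau_P(U),\tau_P(V)):U\cap V=\emptyset,A\subseteq U,B\subseteq V\}\big)$. Strong compactness: with $K(\Re,X)=\inf_{x\in X}\sup_{B\ni x}\Re(B)$, $[\Re\subseteq\tau_P]=\inf_B\min(1,1-\Re(B)+\tau_P(B))$,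 $\wp\le\Re$ pointwise, $FF(\wp)=1-\inf\{\delta\in[0,1]:\{B:\wp(B)>\delta\}\text{ finite}\}$, $\Gamma_P(X,\tau)=\inf_{\Re}\min\big(1,1-\max(0,K(\Re,X)+[\Re\subseteq\tau_P]-1)+\sup_{\wp\le\Re}\max(0,K(\wp,X)+FF(\wp)-1)\big)$, inf/sup over fuzzy families $\Re,\wp:P(X)\to[0,1]$. *)

From HB Require Import structures.
From mathcomp Require Import all_boot all_order all_algebra.
From mathcomp Require Import classical_sets boolp cardinality reals.
Set Implicit Arguments. Unset Strict Implicit. Unset Printing Implicit Defensive.
Import Order.TTheory GRing.Theory Num.Theory.
Local Open Scope classical_set_scope.
Local Open Scope ring_scope.

Section FuzzDefs.
Variables (R : realType) (X : Type).

(* Supremum of a set of reals in [0,1]; sup of the empty set is 0. *)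
Definition Sup01 (S : set R) : R := sup S.
(* Infimum of a set of reals in [0,1]; inf of the empty set is 1. *)
Definition Inf01 (S : set R) : R := 1 - sup [set 1 - s | s in S].

Definition fuzzy_family (F : set X -> R) : Prop := forall B, 0 <= F B <= 1.

Definition fuzzifying_topology (tau : set X -> R) : Prop :=
  [/\ fuzzy_family tau,
      tau setT = 1,
      (forall A B, Num.min (tau A) (tau B) <= tau (A `&` B)) &
      (forall Fam : set (set X),
          Inf01 (tau @` Fam) <= tau (\bigcup_(A in Fam) A))].

Variable tau : set X -> R.

Definition Nbh (x : X) (A : set X) : R :=
  Sup01 [set tau B | B in [set B | B x /\ B `<=` A]].

Definition Cl (A : set X) (x : X) : R := 1 - Nbh x (~` A).

Definition Int (mu : X -> R) (x : X) : R :=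
  Sup01 [set Num.min (tau B) (Inf01 (mu @` B)) | B in [set B : set X | B x]].

Definition tauP (A : set X) : R := Inf01 [set Int (Cl A) x | x in A].

Definition NP (x : X) (A : set X) : R :=
  Sup01 [set tauP B | B in [set B | B x /\ B `<=` A]].

Definition T2P : R :=
  Inf01 [set Sup01 [set Num.min (NP xy.1 UV.1) (NP xy.2 UV.2)
                   | UV in [set UV : set X * set X | UV.1 `&` UV.2 = set0]]
        | xy in [set xy : X * X | xy.1 <> xy.2]].

Definition T4P : R :=
  Inf01 [set Num.min 1
           (1 - Num.min (tauP (~` AB.1)) (tauP (~` AB.2))
            + Sup01 [set Num.min (tauP UV.1) (tauP UV.2)
                    | UV in [set UV : set X * set X |
                             UV.1 `&` UV.2 = set0 /\ AB.1 `<=` UV.1 /\ AB.2 `<=` UV.2]])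
        | AB in [set AB : set X * set X | AB.1 `&` AB.2 = set0]].

Definition Kdeg (F : set X -> R) : R :=
  Inf01 [set Sup01 [set F B | B in [set B : set X | B x]] | x in [set: X]].

Definition subP (F : set X -> R) : R :=
  Inf01 [set Num.min 1 (1 - F B + tauP B) | B in [set: set X]].

Definition FF (F : set X -> R) : R :=
  1 - Inf01 [set d : R | 0 <= d <= 1 /\ finite_set [set B | d < F B]].

Definition GammaP : R :=
  Inf01 [set Num.min 1
           (1 - Num.max 0 (Kdeg Re + subP Re - 1)
            + Sup01 [set Num.max 0 (Kdeg P + FF P - 1)
                    | P in [set P | fuzzy_family P /\ forall B, P B <= Re B]])
        | Re in [set Re | fuzzy_family Re]].

End FuzzDefs.

From mathcomp Require Import all_boot all_order all_algebra.
From mathcomp Require Import classical_sets boolp cardinality reals.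
From mathcomp Require Import lra.
Set Implicit Arguments. Unset Strict Implicit. Unset Printing Implicit Defensive.
Import Order.TTheory GRing.Theory Num.Theory.
Local Open Scope classical_set_scope.
Local Open Scope ring_scope.

(* Fix r with 1 - Gamma_P < r < T_2^P.  T_2^P separates any two points by
   disjoint sets of pre-open degree >= r.  To separate a set A whose complement
   has pre-open degree > 1 - Gamma_P from a set W, separate each x in A from W
   by some pair (U_x, V_x): the sets U_x together with ~A form a fuzzy cover
   below tau_P of degree > 1 - Gamma_P, so strong compactness yields a finite
   subcover, and the finitely many U_x (resp. V_x) are merged by unions
   (resp. intersections), which keep pre-open degree >= r -- for intersections
   this is the hypothesis.  Doing this for A against each point of B, and then
   for B against A, separates A from B, whence the bound on T_4^P. *)

Section Sup01Inf01.
Variable R : realType.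
Implicit Types (S : set R) (b r s : R).

Lemma Sup01_ub S s : (forall u, S u -> u <= 1) -> S s -> s <= Sup01 S.
Proof. by move=> S1 Ss; apply: ub_le_sup => //; exists 1. Qed.

Lemma Sup01_le S b : 0 <= b -> (forall u, S u -> u <= b) -> Sup01 S <= b.
Proof.
move=> b0 Sb; have [->|/set0P S0] := eqVneq S set0; first by rewrite /Sup01 sup0.
exact: ge_sup.
Qed.

Lemma Sup01_gt S r : 0 <= r -> r < Sup01 S -> exists2 s, S s & r < s.
Proof.
move=> r0; have [->|/set0P S0] := eqVneq S set0; first by rewrite /Sup01 sup0 ltNge r0.
exact: sup_gt.
Qed.

Lemma Sup01_in01 S : (forall u, S u -> 0 <= u <= 1) -> 0 <= Sup01 S <= 1.
Proof.
move=> S01; apply/andP; split; last by apply: Sup01_le => // u /S01 /andP[].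
have [->|/set0P[s Ss]] := eqVneq S set0; first by rewrite /Sup01 sup0.
have /andP[s0 _] := S01 s Ss.
by apply: (le_trans s0); apply: Sup01_ub Ss => u /S01 /andP[].
Qed.

Lemma Sup01_ge0 S : (forall u, S u -> 0 <= u <= 1) -> 0 <= Sup01 S.
Proof. by move/Sup01_in01/andP=> []. Qed.

Lemma Inf01_lb S s : (forall u, S u -> 0 <= u) -> S s -> Inf01 S <= s.
Proof.
move=> S0 Ss; rewrite /Inf01 lerBlDr -lerBlDl.
apply: Sup01_ub; last by exists s.
by move=> _ [u Su <-]; rewrite lerBlDr lerDl S0.
Qed.

Lemma Inf01_ge S b : b <= 1 -> (forall u, S u -> b <= u) -> b <= Inf01 S.
Proof.
move=> b1 Sb; rewrite /Inf01 lerBrDr -lerBrDl.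
apply: Sup01_le; first by rewrite subr_ge0.
by move=> _ [u Su <-]; rewrite lerD2l lerN2 Sb.
Qed.

Lemma Inf01_lt S r : r <= 1 -> Inf01 S < r -> exists2 s, S s & s < r.
Proof.
move=> r1; rewrite /Inf01 ltrBlDr -ltrBlDl => /Sup01_gt [].
  by rewrite subr_ge0.
by move=> _ [s Ss <-]; rewrite ltrD2l ltrN2; exists s.
Qed.

Lemma Inf01_in01 S : (forall u, S u -> 0 <= u <= 1) -> 0 <= Inf01 S <= 1.
Proof.
move=> S01; apply/andP; split; first by apply: Inf01_ge => // u /S01 /andP[].
rewrite /Inf01 lerBlDr lerDl.
suff /andP[] : 0 <= Sup01 [set 1 - u | u in S] <= 1 by [].
apply: Sup01_in01 => _ [u /S01 /andP[u0 u1] <-].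
by rewrite subr_ge0 u1 lerBlDr lerDl.
Qed.

Lemma in01_eq1 (x : R) : 0 <= x <= 1 -> 1 <= x -> x = 1.
Proof. by case/andP=> _ x1 x_ge1; apply: le_anti; rewrite x1 x_ge1. Qed.

Lemma min_in01 (a b : R) : 0 <= a <= 1 -> 0 <= b <= 1 -> 0 <= Num.min a b <= 1.
Proof. by move=> /andP[a0 a1] /andP[b0 b1]; rewrite le_min a0 b0 ge_min a1. Qed.

Lemma le_of_between (c t s : R) :
  c < t -> (forall r, c < r -> r < t -> r <= s) -> t <= s.
Proof.
move=> ct between; rewrite leNgt; apply/negP => st.
have := between ((Num.max c s + t) / 2).
have [cm sm] : c <= Num.max c s /\ s <= Num.max c s by rewrite !le_max !lexx orbT.
have mt : Num.max c s < t by rewrite gt_max ct.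
lra.
Qed.

Lemma lukasiewicz_and_le_imp (t g a s : R) :
  t <= 1 -> 0 <= g <= 1 -> a <= 1 -> 0 <= s ->
  (1 - g < a -> forall r, 1 - g < r -> r < t -> r <= s) ->
  Num.max 0 (t + g - 1) <= Num.min 1 (1 - a + s).
Proof.
move=> t1 /andP[g0 g1] a1 s0 sep; rewrite le_min !ge_max ler01 /=.
have [ag|ga] := leP a (1 - g); first by apply/and3P; split; lra.
have [tg|gt] := leP t (1 - g); first by apply/and3P; split; lra.
have := le_of_between gt (sep ga); lra.
Qed.

End Sup01Inf01.

Section FuzzifyingSpace.
Variables (R : realType) (X : Type) (tau : set X -> R).
Hypothesis tau01 : fuzzy_family tau.
Hypothesis tauT : tau setT = 1.
Implicit Types (F Re : set X -> R) (A B C W : set X).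

Lemma Nbh_in01 x A : 0 <= Nbh tau x A <= 1.
Proof. by apply: Sup01_in01 => _ [B _ <-]. Qed.

Lemma Cl_in01 A x : 0 <= Cl tau A x <= 1.
Proof.
have /andP[N0 N1] := Nbh_in01 x (~` A).
by rewrite /Cl subr_ge0 N1 lerBlDr lerDl N0.
Qed.

Lemma Int_in01 mu x : (forall z, 0 <= mu z <= 1) -> 0 <= Int tau mu x <= 1.
Proof.
move=> mu01; apply: Sup01_in01 => _ [B _ <-].
by apply: min_in01 => //; apply: Inf01_in01 => _ [z _ <-].
Qed.

Lemma tauP_in01 A : 0 <= tauP tau A <= 1.
Proof. by apply: Inf01_in01 => _ [x _ <-]; apply: Int_in01 => z; apply: Cl_in01. Qed.

Lemma tauP_set0 : tauP tau set0 = 1.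
Proof.
by apply: in01_eq1 (tauP_in01 set0) _; apply: Inf01_ge => // u [x []].
Qed.

Lemma tauP_setT : tauP tau setT = 1.
Proof.
apply: in01_eq1 (tauP_in01 setT) _; apply: Inf01_ge => // _ [x _ <-].
have ClT z : Cl tau setT z = 1.
  suff N0 : Nbh tau z (~` setT) = 0 by rewrite /Cl N0 subr0.
  apply/eqP; rewrite eq_le; have /andP[-> _] := Nbh_in01 z (~` setT).
  by rewrite andbT; apply: Sup01_le => // _ [B [Bz /(_ z Bz) []]].
have -> : 1 = Num.min (tau setT) (Inf01 [set Cl tau setT z | z in setT]).
  apply/esym/eqP; rewrite eq_le ge_min tauT lexx le_min lexx /=.
  by apply: Inf01_ge => // _ [z _ <-]; rewrite ClT.
apply: Sup01_ub; last by exists setT.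
by move=> _ [B _ <-]; rewrite ge_min; apply/orP; left; case/andP: (tau01 B).
Qed.

Lemma Cl_subset A A' x : A `<=` A' -> Cl tau A x <= Cl tau A' x.
Proof.
move=> AA'; rewrite /Cl lerD2l lerN2.
apply: Sup01_le => [|_ [B [Bx BA'] <-]]; first by have /andP[] := Nbh_in01 x (~` A).
apply: Sup01_ub => [_ [C _ <-]|]; first by have /andP[] := tau01 C.
by exists B => //; split=> // z /BA' + /AA'.
Qed.

Lemma Int_le (mu mu' : X -> R) x :
  (forall z, 0 <= mu z <= 1) -> (forall z, 0 <= mu' z <= 1) ->
  (forall z, mu z <= mu' z) -> Int tau mu x <= Int tau mu' x.
Proof.
move=> mu01 mu'01 le_mu.
apply: Sup01_le => [|_ [B Bx <-]]; first by have /andP[] := Int_in01 x mu'01.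
have le_inf : Inf01 [set mu z | z in B] <= Inf01 [set mu' z | z in B].
  apply: Inf01_ge => [|_ [z Bz <-]].
    suff /andP[] : 0 <= Inf01 [set mu z | z in B] <= 1 by [].
    by apply: Inf01_in01 => _ [z _ <-].
  apply: (le_trans _ (le_mu z)); apply: Inf01_lb => [_ [w _ <-]|]; last by exists z.
  by have /andP[] := mu01 w.
apply: (@le_trans _ _ (Num.min (tau B) (Inf01 [set mu' z | z in B]))).
  by rewrite le_min !ge_min lexx le_inf orbT.
apply: Sup01_ub; last by exists B.
by move=> _ [C _ <-]; rewrite ge_min; apply/orP; left; case/andP: (tau01 C).
Qed.

Lemma tauP_le_Int_Cl C x : C x -> tauP tau C <= Int tau (Cl tau C) x.
Proof.
move=> Cx; apply: Inf01_lb => [_ [w _ <-]|]; last by exists x.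
by have /andP[] := Int_in01 w (Cl_in01 C).
Qed.

Lemma tauP_setU A B : Num.min (tauP tau A) (tauP tau B) <= tauP tau (A `|` B).
Proof.
have le_Int C x : C `<=` A `|` B -> C x -> tauP tau C <= Int tau (Cl tau (A `|` B)) x.
  move=> CAB Cx; apply: (le_trans (tauP_le_Int_Cl Cx)).
  by apply: Int_le => [z|z|z]; [exact: Cl_in01|exact: Cl_in01|exact: Cl_subset].
apply: Inf01_ge => [|_ [x ABx <-]].
  by rewrite ge_min; apply/orP; left; case/andP: (tauP_in01 A).
rewrite ge_min; case: ABx => [Ax|Bx].
  by apply/orP; left; apply: le_Int => // z; left.
by apply/orP; right; apply: le_Int => // z; right.
Qed.

Lemma NP_in01 x A : 0 <= NP tau x A <= 1.
Proof. by apply: Sup01_in01 => _ [B _ <-]; apply: tauP_in01. Qed.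

Lemma T2P_in01 : 0 <= T2P tau <= 1.
Proof.
apply: Inf01_in01 => _ [xy _ <-]; apply: Sup01_in01 => _ [UV _ <-].
by apply: min_in01; apply: NP_in01.
Qed.

Lemma Kdeg_in01 F : fuzzy_family F -> 0 <= Kdeg F <= 1.
Proof. by move=> F01; apply: Inf01_in01 => _ [z _ <-]; apply: Sup01_in01 => _ [B _ <-]. Qed.

Lemma Kdeg_ge F c : fuzzy_family F -> c <= 1 ->
  (forall z, exists2 B, B z & c <= F B) -> c <= Kdeg F.
Proof.
move=> F01 c1 Fcover; apply: Inf01_ge => // _ [z _ <-].
have [B Bz cB] := Fcover z; apply: (le_trans cB).
by apply: Sup01_ub => [_ [C _ <-]|]; [have /andP[] := F01 C | exists B].
Qed.

Lemma FF_in01 F : 0 <= FF F <= 1.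
Proof.
have /andP[d0 d1] :
    0 <= Inf01 [set d : R | 0 <= d <= 1 /\ finite_set [set B | d < F B]] <= 1.
  by apply: Inf01_in01 => d [].
by rewrite /FF subr_ge0 d1 lerBlDr lerDl d0.
Qed.

Lemma subP_in01 F : fuzzy_family F -> 0 <= subP tau F <= 1.
Proof.
move=> F01; apply: Inf01_in01 => _ [B _ <-].
have /andP[F0 F1] := F01 B; have /andP[t0 _] := tauP_in01 B.
by rewrite le_min ge_min lexx ler01 /= andbT; lra.
Qed.

Lemma subP_eq1 F : fuzzy_family F -> (forall B, F B <= tauP tau B) -> subP tau F = 1.
Proof.
move=> F01 FtauP; apply: in01_eq1 (subP_in01 F01) _.
by apply: Inf01_ge => // _ [B _ <-]; rewrite le_min lexx /=; have := FtauP B; lra.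
Qed.

Definition Gamma_at (Re : set X -> R) : R :=
  Num.min 1 (1 - Num.max 0 (Kdeg Re + subP tau Re - 1)
             + Sup01 [set Num.max 0 (Kdeg P + FF P - 1)
                     | P in [set P | fuzzy_family P /\ forall B, P B <= Re B]]).

Lemma Gamma_at_in01 Re : fuzzy_family Re -> 0 <= Gamma_at Re <= 1.
Proof.
move=> Re01; have /andP[K0 K1] := Kdeg_in01 Re01; have /andP[s0 s1] := subP_in01 Re01.
have S0 : 0 <= Sup01 [set Num.max 0 (Kdeg P + FF P - 1)
                     | P in [set P | fuzzy_family P /\ forall B, P B <= Re B]].
  apply: Sup01_ge0 => _ [P [P01 _] <-].
  have /andP[KP0 KP1] := Kdeg_in01 P01; have /andP[FF0 FF1] := FF_in01 P.
  by rewrite le_max lexx ge_max ler01 /=; lra.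
have m1 : Num.max 0 (Kdeg Re + subP tau Re - 1) <= 1 by rewrite ge_max ler01 /=; lra.
by rewrite le_min ler01 ge_min lexx /=; lra.
Qed.

Lemma GammaP_in01 : 0 <= GammaP tau <= 1.
Proof. by apply: Inf01_in01 => _ [Re Re01 <-]; apply: Gamma_at_in01. Qed.

Lemma GammaP_le_at Re : fuzzy_family Re -> GammaP tau <= Gamma_at Re.
Proof.
move=> Re01; apply: Inf01_lb => [_ [F F01 <-]|]; last by exists Re.
by have /andP[] := Gamma_at_in01 F01.
Qed.

Lemma GammaP_finite_subcover Re : fuzzy_family Re -> (forall B, Re B <= tauP tau B) ->
  1 - GammaP tau < Kdeg Re ->
  exists s : seq (set X),
    (forall B, B \in s -> 0 < Re B) /\ (forall z, exists2 B, B \in s & B z).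
Proof.
move=> Re01 RetauP GK; have /andP[K0 K1] := Kdeg_in01 Re01.
have := GammaP_le_at Re01.
rewrite /Gamma_at subP_eq1 // addrK (max_r K0) le_min => /andP[_ GS].
have /Sup01_gt[//|_ [P [P01 PRe] <-]] :
    0 < Sup01 [set Num.max 0 (Kdeg P + FF P - 1)
              | P in [set P | fuzzy_family P /\ forall B, P B <= Re B]] by lra.
rewrite lt_max ltxx /= /FF => KFF.
have [d [/andP[d0 d1] /finite_seqP[s sE]] dK] :
    exists2 d, (0 <= d <= 1 /\ finite_set [set B | d < P B]) & d < Kdeg P.
  by apply: Inf01_lt => //; have /andP[] := Kdeg_in01 P01; lra.
exists s; split=> [B|z].
  move=> Bs; have /= dPB : [set B | d < P B] B by rewrite sE.
  by apply: (le_lt_trans d0); apply: (lt_le_trans dPB).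
have : d < Sup01 [set P B | B in [set B | B z]].
  apply: (lt_le_trans dK); apply: Inf01_lb => [_ [w _ <-]|]; last by exists z.
  by apply: Sup01_ge0 => _ [B _ <-].
case/Sup01_gt => // _ [B Bz <-] dPB; exists B => //.
by have : [set B | d < P B] B by []; rewrite sE.
Qed.

Definition separating (r : R) (A B : set X) (UV : set X * set X) : Prop :=
  [/\ A `<=` UV.1, B `<=` UV.2, UV.1 `&` UV.2 = set0,
       r <= tauP tau UV.1 & r <= tauP tau UV.2].

Lemma separating_sym r A B U V : separating r A B (U, V) -> separating r B A (V, U).
Proof.
case=> AU BV UV rU rV.
by split; [exact: BV | exact: AU | rewrite /= setIC | exact: rV | exact: rU].
Qed.

Lemma separating_subl r A A' B p :
  separating r A B p -> A' `<=` A -> separating r A' B p.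
Proof. by case=> AU *; split=> //; apply: subset_trans AU. Qed.

Lemma separating_fst r A B p : separating r A B p -> separating r p.1 B p.
Proof. by case=> *; split. Qed.

Lemma separating_set0 r W : r <= 1 -> separating r set0 W (set0, setT).
Proof. by move=> r1; split; rewrite /= ?set0I ?tauP_set0 ?tauP_setT. Qed.

Lemma T2P_separating r x y : 0 <= r -> r < T2P tau -> x <> y ->
  exists p, separating r [set x] [set y] p.
Proof.
move=> r0 rT xy.
have : r < Sup01 [set Num.min (NP tau x UV.1) (NP tau y UV.2)
                 | UV in [set UV : set X * set X | UV.1 `&` UV.2 = set0]].
  apply: (lt_le_trans rT); apply: Inf01_lb => [_ [xy' _ <-]|]; last by exists (x, y).
  by apply: Sup01_ge0 => _ [UV _ <-]; apply: min_in01; apply: NP_in01.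
case/Sup01_gt => // _ [[U V] /= UV <-]; rewrite lt_min => /andP[].
case/Sup01_gt => // _ [B [Bx BU] <-] rB; case/Sup01_gt => // _ [C [Cy CV] <-] rC.
exists (B, C); split=> /=; [by move=> _ -> | by move=> _ -> | | exact: ltW | exact: ltW].
by apply/seteqP; split=> // z [/BU Uz /CV Vz]; rewrite -UV.
Qed.

Hypothesis tauP_setI : forall A B : set X,
  Num.min (tauP tau A) (tauP tau B) <= tauP tau (A `&` B).

Lemma separating_setU r A A' W p p' : separating r A W p -> separating r A' W p' ->
  separating r (A `|` A') W (p.1 `|` p'.1, p.2 `&` p'.2).
Proof.
case=> AU WV UV rU rV [A'U' WV' UV' rU' rV']; split=> /=.
- exact: setUSS.
- by move=> z Wz; split; [apply: WV | apply: WV'].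
- by apply/seteqP; split=> z // [[Uz|U'z] [Vz V'z]]; [rewrite -UV | rewrite -UV'].
- apply: (le_trans _ (tauP_setU p.1 p'.1)); rewrite le_min.
  by apply/andP; split; [exact: rU | exact: rU'].
- apply: (le_trans _ (tauP_setI p.2 p'.2)); rewrite le_min.
  by apply/andP; split; [exact: rV | exact: rV'].
Qed.

Lemma separating_finite_cover r A W (s : seq (set X)) : r <= 1 ->
  (forall z, A z -> exists2 C, C \in s & C z) ->
  (forall C, C \in s -> exists p, separating r (C `&` A) W p) ->
  exists p, separating r A W p.
Proof.
move=> r1; elim: s A => [|C s IH] A covA sepC.
  exists (set0, setT); apply: (separating_subl (separating_set0 W r1)).
  by move=> z /covA [].
have [p sep_p] := sepC C (mem_head C s).
have [p' sep_p'] : exists p', separating r (A `\` C) W p'.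
  apply: IH => [z [Az nCz]|C' C's].
    by have [C''] := covA z Az; rewrite in_cons => /orP[/eqP -> //|]; exists C''.
  have [p' sep'] : exists p', separating r (C' `&` A) W p'.
    by apply: sepC; rewrite in_cons C's orbT.
  by exists p'; apply: (separating_subl sep') => z [C'z [Az _]].
exists (p.1 `|` p'.1, p.2 `&` p'.2).
apply: (separating_subl (separating_setU sep_p sep_p')).
by move=> z Az; have [Cz|nCz] := pselect (C z); [left | right].
Qed.

Lemma separating_closed r A W : r <= 1 ->
  1 - GammaP tau < r -> 1 - GammaP tau < tauP tau (~` A) ->
  (forall x, A x -> exists p, separating r [set x] W p) ->
  exists p, separating r A W p.
Proof.
move=> r1 Gr GA sepx.
(* Every set whose trace on A can be separated from W is kept with its
   pre-open degree: ~A and each U_x qualify. *)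
pose Re C := if `[< exists p, separating r (C `&` A) W p >] then tauP tau C else 0.
have Re01 : fuzzy_family Re.
  by move=> C; rewrite /Re; case: ifP => _; [exact: tauP_in01 | rewrite lexx ler01].
have RetauP B : Re B <= tauP tau B.
  by rewrite /Re; case: ifP => _; [exact: lexx | case/andP: (tauP_in01 B)].
have ReE C p : separating r (C `&` A) W p -> Re C = tauP tau C.
  by move=> sep; rewrite /Re asboolT //; exists p.
have K : Num.min (tauP tau (~` A)) r <= Kdeg Re.
  apply: Kdeg_ge => // [|z]; first by rewrite ge_min r1 orbT.
  have [Az|nAz] := pselect (A z).
    have [p sep_p] := sepx z Az; have [/(_ z erefl) pz _ _ rp _] := sep_p.
    exists p.1; first exact: pz.
    rewrite (ReE _ p); first by rewrite ge_min; apply/orP; right; exact: rp.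
    by apply: (separating_subl (separating_fst sep_p)) => w [].
  exists (~` A); first exact: nAz.
  rewrite (ReE _ (set0, setT)); first by rewrite ge_min lexx.
  by apply: (separating_subl (separating_set0 W r1)) => w [nAw /nAw].
have GK : 1 - GammaP tau < Kdeg Re by apply: (lt_le_trans _ K); rewrite lt_min GA Gr.
have [s [s_pos s_cov]] := GammaP_finite_subcover Re01 RetauP GK.
apply: (separating_finite_cover r1 (fun z _ => s_cov z)) => C /s_pos.
by rewrite /Re; case: asboolP => // _; rewrite ltxx.
Qed.

Lemma separating_disjoint r A B :
  1 - GammaP tau < r -> r < T2P tau -> A `&` B = set0 ->
  1 - GammaP tau < tauP tau (~` A) -> 1 - GammaP tau < tauP tau (~` B) ->
  exists p, separating r A B p.
Proof.
move=> Gr rT AB GA GB.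
have /andP[_ G1] := GammaP_in01; have /andP[_ T1] := T2P_in01.
have r0 : 0 <= r by apply/ltW/(le_lt_trans _ Gr); rewrite subr_ge0.
have r1 : r <= 1 by apply: ltW; exact: lt_le_trans rT T1.
have sep_point y : B y -> exists p, separating r A [set y] p.
  move=> By; apply: separating_closed => // x Ax; apply: T2P_separating => // xy.
  suff : (A `&` B) x by rewrite AB.
  by split; rewrite // xy.
have [[U V] sepBA] : exists p, separating r B A p.
  apply: separating_closed => // y /sep_point[[U V] sepAy].
  by exists (V, U); apply: separating_sym.
by exists (V, U); apply: separating_sym.
Qed.

End FuzzifyingSpace.

Theorem lemma3p4 (R : realType) (X : Type) (tau : set X -> R) :
  fuzzifying_topology tau ->
  (forall A B : set X,
      Num.min (tauP tau A) (tauP tau B) <= tauP tau (A `&` B)) ->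
  Num.max 0 (T2P tau + GammaP tau - 1) <= T4P tau.
Proof.
move=> [tau01 tauT _ _] tauP_setI.
have /andP[_ T1] := T2P_in01 tau01; have G01 := GammaP_in01 tau01.
rewrite /T4P; apply: Inf01_ge => [|_ [[A B] /= AB <-]].
  by rewrite ge_max ler01 /=; case/andP: G01 => *; lra.
apply: lukasiewicz_and_le_imp => //.
- by rewrite ge_min; apply/orP; left; case/andP: (tauP_in01 tau01 (~` A)).
- by apply: Sup01_ge0 => _ [p _ <-]; apply: min_in01; apply: tauP_in01.
rewrite lt_min => /andP[GA GB] r Gr rT.
have [p [AU BV UV rU rV]] := separating_disjoint tau01 tauT tauP_setI Gr rT AB GA GB.
apply: (@le_trans _ _ (Num.min (tauP tau p.1) (tauP tau p.2))).
  by rewrite le_min; apply/andP; split; [exact: rU | exact: rV].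
apply: Sup01_ub; last by exists p.
by move=> _ [q _ <-]; rewrite ge_min; apply/orP; left; case/andP: (tauP_in01 tau01 q.1).
Qed.
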